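(* Let $\phi:\Gamma\twoheadrightarrow\Lambda$ be an epimorphism of finite-dimensional algebras and $\mathcal M$ a full subcategory of $\mathrm{mod}(\Gamma)$ which contains $\mathrm{mod}(\Lambda)$. Then (1) the poset $\mathrm{widshad}_{\mathcal M}(\Gamma)$ is a complete lattice, and (2) the maps $(-)\cap\mathcal M:\mathrm{wide}(\Gamma)\to\mathrm{widshad}_{\mathcal M}(\Gamma)$ and $(-)\cap\mathrm{mod}(\Lambda):\mathrm{widshad}_{\mathcal M}(\Gamma)\to\mathrm{wide}(\Lambda)$ are surjective meet-semilattice maps.
   Context: $\mathrm{mod}(\Gamma)$ is the category of finitely generated left $\Gamma$-modules; via $\phi$, $\mathrm{mod}(\Lambda)$ is a full subcategory of $\mathrm{mod}(\Gamma)$. Subcategories are full and closed under isomorphism. A subcategory is wide if it is abelian (closed under kernels and cokernels) and closed under extensions; $\mathrm{wide}(\Gamma)$ is the set of wide subcategories ordered by inclusion. For $\mathcal W\in\mathrm{wide}(\Gamma)$ its $\mathcal M$-wide shadow is $\mathcal W\cap\mathcal M$; $\mathrm{widshad}_{\mathcal M}(\Gamma)$ is the poset of all $\mathcal M$-wide shadows ordered by inclusion. *)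

(* Finite-dimensional algebras = falgType F over a field F;
   finitely generated (= finite-dimensional) left modules = matrix representations. *)
From HB Require Import structures.
From mathcomp Require Import all_boot all_order all_algebra.
From mathcomp Require Export falgebra.
Set Implicit Arguments. Unset Strict Implicit. Unset Printing Implicit Defensive.
Import GRing.Theory.
Local Open Scope ring_scope.

Section Modules.
Variables (F : fieldType) (A : falgType F).

(* A finitely generated left A-module: F^n (column vectors) with a unital
   algebra action a |-> fact a, acting by v |-> fact a *m v. *)
Record fmod := FMod {
  fdim : nat;
  fact : A -> 'M[F]_fdim;
  fact_linear : linear fact;
  fact_mul : forall a b, fact (a * b) = fact a *m fact b;
  fact_one : fact 1 = 1%:M }.

Definition is_hom (X Y : fmod) (f : 'M[F]_(fdim Y, fdim X)) : Prop :=
  forall a, f *m fact X a = fact Y a *m f.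
Arguments is_hom : clear implicits.

Definition iso (X Y : fmod) : Prop :=
  exists (f : 'M[F]_(fdim Y, fdim X)) (g : 'M[F]_(fdim X, fdim Y)),
    [/\ is_hom X Y f, is_hom Y X g, g *m f = 1%:M & f *m g = 1%:M].
Arguments iso : clear implicits.

(* Subcategories: full, given by a predicate on objects. *)
Definition subcat := fmod -> Prop.
Definition iso_closed (P : subcat) : Prop :=
  forall X Y, iso X Y -> P X -> P Y.

Definition injmx m n (i : 'M[F]_(m, n)) : Prop :=
  forall w : 'cV[F]_n, i *m w = 0 -> w = 0.
Definition surjmx m n (p : 'M[F]_(m, n)) : Prop :=
  forall w : 'cV[F]_m, exists v : 'cV[F]_n, p *m v = w.

Definition is_kernel (X Y : fmod) (f : 'M[F]_(fdim Y, fdim X))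
  (K : fmod) (i : 'M[F]_(fdim X, fdim K)) : Prop :=
  [/\ is_hom K X i, injmx i, f *m i = 0 &
      forall v : 'cV[F]_(fdim X), f *m v = 0 -> exists w, v = i *m w].
Arguments is_kernel : clear implicits.

Definition is_cokernel (X Y : fmod) (f : 'M[F]_(fdim Y, fdim X))
  (C : fmod) (p : 'M[F]_(fdim C, fdim Y)) : Prop :=
  [/\ is_hom Y C p, surjmx p, p *m f = 0 &
      forall v : 'cV[F]_(fdim Y), p *m v = 0 -> exists u, v = f *m u].
Arguments is_cokernel : clear implicits.

Definition short_exact (X E Y : fmod) (i : 'M[F]_(fdim E, fdim X))
  (p : 'M[F]_(fdim Y, fdim E)) : Prop :=
  [/\ is_hom X E i, is_hom E Y p, injmx i, surjmx p &
      p *m i = 0 /\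
      forall v : 'cV[F]_(fdim E), p *m v = 0 -> exists u, v = i *m u].
Arguments short_exact : clear implicits.

Definition kernel_closed (P : subcat) : Prop :=
  forall X Y f, P X -> P Y -> is_hom X Y f ->
  forall K i, is_kernel X Y f K i -> P K.
Definition cokernel_closed (P : subcat) : Prop :=
  forall X Y f, P X -> P Y -> is_hom X Y f ->
  forall C p, is_cokernel X Y f C p -> P C.
Definition extension_closed (P : subcat) : Prop :=
  forall X E Y i p, short_exact X E Y i p ->
  P X -> P Y -> P E.

Definition wide (P : subcat) : Prop :=
  [/\ iso_closed P, kernel_closed P, cokernel_closed P & extension_closed P].

Definition subcat_le (P Q : subcat) : Prop := forall X, P X -> Q X.
Definition subcat_eq (P Q : subcat) : Prop := forall X, P X <-> Q X.
Definition capS (P Q : subcat) : subcat := fun X => P X /\ Q X.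

Definition widshad (M : subcat) (S : subcat) : Prop :=
  exists W, wide W /\ subcat_eq S (capS W M).

End Modules.
Arguments is_hom {F A} X Y f.
Arguments iso {F A} X Y.
Arguments is_kernel {F A} X Y f K i.
Arguments is_cokernel {F A} X Y f C p.
Arguments short_exact {F A} X E Y i p.

Section Posets.
Variables (F : fieldType) (A : falgType F).
Implicit Types (D Fam : subcat A -> Prop).

Definition is_lub D Fam (S : subcat A) : Prop :=
  [/\ D S, (forall T, Fam T -> subcat_le T S) &
      forall U, D U -> (forall T, Fam T -> subcat_le T U) -> subcat_le S U].
Definition is_glb D Fam (S : subcat A) : Prop :=
  [/\ D S, (forall T, Fam T -> subcat_le S T) &
      forall U, D U -> (forall T, Fam T -> subcat_le U T) -> subcat_le U S].

Definition complete_lattice D : Prop :=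
  forall Fam, (forall T, Fam T -> D T) ->
  (exists S, is_lub D Fam S) /\ (exists S, is_glb D Fam S).

Definition is_meet D (x y m : subcat A) : Prop :=
  is_glb D (fun z => z = x \/ z = y) m.
End Posets.

Definition meet_map (F : fieldType) (A B : falgType F)
  (D1 : subcat A -> Prop) (D2 : subcat B -> Prop) (f : subcat A -> subcat B) : Prop :=
  (forall x, D1 x -> D2 (f x)) /\
  (forall x y m, D1 x -> D1 y -> is_meet D1 x y m -> is_meet D2 (f x) (f y) (f m)).

Definition surj_map (F : fieldType) (A B : falgType F)
  (D1 : subcat A -> Prop) (D2 : subcat B -> Prop) (f : subcat A -> subcat B) : Prop :=
  forall y, D2 y -> exists x, D1 x /\ subcat_eq (f x) y.

Section Restriction.
Variables (F : fieldType) (Gam Lam : falgType F) (phi : {lrmorphism Gam -> Lam}).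

Lemma res_linear (Y : fmod Lam) : linear (fun a => fact Y (phi a)).
Proof. by move=> k a b /=; rewrite linearP fact_linear. Qed.
Lemma res_mul (Y : fmod Lam) a b :
  fact Y (phi (a * b)) = fact Y (phi a) *m fact Y (phi b).
Proof. by rewrite rmorphM fact_mul. Qed.
Lemma res_one (Y : fmod Lam) : fact Y (phi 1) = 1%:M.
Proof. by rewrite rmorph1 fact_one. Qed.

Definition res (Y : fmod Lam) : fmod Gam :=
  @FMod F Gam (fdim Y) (fun a => fact Y (phi a)) (res_linear Y) (res_mul Y) (res_one Y).

(* mod(Lam) as a full (iso-closed) subcategory of mod(Gam) *)
Definition modL : subcat Gam := fun X => exists Y, iso X (res Y).

(* S |-> S ∩ mod(Lam), viewed as a subcategory of mod(Lam) *)
Definition restrL (S : subcat Gam) : subcat Lam := fun Y => S (res Y).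
End Restriction.

(* Binary meets in both posets are intersections, and wide subcategories are
   closed under arbitrary intersections; so the shadows have all meets (take the
   intersection of all wide subcategories realising them), hence form a complete
   lattice, and both maps preserve meets.  Only the surjectivity of
   (-) ∩ mod(Λ) needs work.  A wide V ⊆ mod(Λ), inflated along φ, is closed
   under kernels and cokernels in mod(Γ), because mod(Λ) is closed under
   submodules and quotients there.  By Ringel's argument, the modules filtered
   by the simple objects of such a subcategory form a wide subcategory W of
   mod(Γ): Schur's lemma makes those simples a semibrick, and kernels and
   cokernels are computed by induction along the filtrations.  Finally
   W ∩ mod(Λ) = V, since all subquotients of a filtration of a Λ-module are
   Λ-modules and V is closed under extensions inside mod(Λ). *)

From HB Require Import structures.
From mathcomp Require Import all_boot all_order all_algebra.
From mathcomp Require Import falgebra.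
From Stdlib Require Import Classical.
Set Implicit Arguments. Unset Strict Implicit. Unset Printing Implicit Defensive.
Import GRing.Theory.
Local Open Scope ring_scope.

Section MatrixMaps.
Variable F : fieldType.

Lemma eq_mx_cV m n (A B : 'M[F]_(m, n)) :
  (forall v : 'cV_n, A *m v = B *m v) -> A = B.
Proof.
move=> eqAB; apply/trmx_inj/eqP/mulmxP => u.
by rewrite -[u]trmxK -!trmx_mul eqAB.
Qed.

Lemma flatmx_eq m n (A B : 'M[F]_(m, n)) : m = 0%N -> A = B.
Proof. by move=> m0; subst; rewrite [A]flatmx0 [B]flatmx0. Qed.

Lemma injmx_full m n (i : 'M[F]_(m, n)) : injmx i <-> row_full i.
Proof.
split=> [inj_i | /row_full_inj inj_i w iw0]; last by apply: inj_i; rewrite iw0 mulmx0.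
rewrite /row_full -mxrank_tr; apply/inj_row_free => v vi0.
apply: trmx_inj; rewrite trmx0; apply: inj_i.
by rewrite -[i]trmxK -trmx_mul vi0 trmx0.
Qed.

Lemma surjmx_free m n (p : 'M[F]_(m, n)) : surjmx p <-> row_free p.
Proof.
split=> [surj_p | /row_freeP[B pB] w]; last by exists (B *m w); rewrite mulmxA pB mul1mx.
apply/inj_row_free => v vp0; apply: eq_mx_cV => w.
by have [u <-] := surj_p w; rewrite mulmxA vp0 !mul0mx.
Qed.

Lemma injmx_inj m n p (i : 'M[F]_(m, n)) : injmx i -> injective (@mulmx F m n p i).
Proof. by move/injmx_full/row_full_inj. Qed.

Lemma surjmx_inj m n p (s : 'M[F]_(m, n)) : surjmx s -> injective ((@mulmx F p m n)^~ s).
Proof. by move/surjmx_free/row_free_inj. Qed.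

Lemma injmx_mul m n p (i : 'M[F]_(m, n)) (j : 'M[F]_(n, p)) :
  injmx i -> injmx j -> injmx (i *m j).
Proof. by move=> inj_i inj_j w; rewrite -mulmxA => /inj_i /inj_j. Qed.

Lemma surjmx_mul m n p (s : 'M[F]_(m, n)) (t : 'M[F]_(n, p)) :
  surjmx s -> surjmx t -> surjmx (s *m t).
Proof.
move=> surj_s surj_t w; have [u <-] := surj_s w; have [v <-] := surj_t u.
by exists v; rewrite mulmxA.
Qed.

Lemma injmx_leq m n (i : 'M[F]_(m, n)) : injmx i -> (n <= m)%N.
Proof. by move/injmx_full/eqP <-; apply: rank_leq_row. Qed.

Lemma injmx_ltn m n (i : 'M[F]_(m, n)) : injmx i -> ~ surjmx i -> (n < m)%N.
Proof.
move=> /injmx_full/eqP rk_i not_surj; rewrite -rk_i ltn_neqAle rank_leq_row andbT.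
by apply/negP => rk_m; apply/not_surj/surjmx_free.
Qed.

Lemma surjmx_ltn m n (s : 'M[F]_(m, n)) : surjmx s -> ~ injmx s -> (m < n)%N.
Proof.
move=> /surjmx_free/eqP rk_s not_inj; rewrite -rk_s ltn_neqAle rank_leq_col andbT.
by apply/negP => rk_n; apply/not_inj/injmx_full.
Qed.

Lemma injmx0 m n : injmx (0 : 'M[F]_(m, n)) -> n = 0%N.
Proof. by move/injmx_full/eqP; rewrite mxrank0. Qed.

Lemma colker_exists m n (f : 'M[F]_(m, n)) : exists k (i : 'M[F]_(n, k)),
  [/\ injmx i, f *m i = 0 & forall v : 'cV_n, f *m v = 0 -> exists w, v = i *m w].
Proof.
pose B := row_base (kermx f^T).
have fB0 : B *m f^T = 0 by apply/sub_kermxP; rewrite eq_row_base.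
exists _, B^T; split.
- by apply/injmx_full; rewrite /row_full mxrank_tr; apply: row_base_free.
- by apply: trmx_inj; rewrite trmx_mul trmxK trmx0.
move=> v fv0; have : (v^T <= B)%MS.
  by rewrite eq_row_base; apply/sub_kermxP; rewrite -trmx_mul fv0 trmx0.
by case/submxP => D vD; exists D^T; rewrite -[v]trmxK vD trmx_mul.
Qed.

Lemma colcoker_exists m n (f : 'M[F]_(m, n)) : exists c (p : 'M[F]_(c, m)),
  [/\ surjmx p, p *m f = 0 & forall v : 'cV_m, p *m v = 0 -> exists u, v = f *m u].
Proof.
pose p := row_base (kermx f).
have pf0 : p *m f = 0 by apply/sub_kermxP; rewrite eq_row_base.
exists _, p; split => //; first by apply/surjmx_free; apply: row_base_free.
move=> v pv0.
have f_ker : (f^T <= kermx p^T)%MS by apply/sub_kermxP; rewrite -trmx_mul pf0 trmx0.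
(* Both spaces have rank [\rank f]. *)
have ker_f : (kermx p^T <= f^T)%MS.
  rewrite -(mxrank_leqif_sup f_ker) mxrank_ker !mxrank_tr /p eq_row_base mxrank_ker.
  by rewrite subKn ?rank_leq_row.
have /submxP[D vD] : (v^T <= f^T)%MS.
  by apply: submx_trans ker_f; apply/sub_kermxP; rewrite -trmx_mul pv0 trmx0.
by exists D^T; apply: trmx_inj; rewrite trmx_mul trmxK vD.
Qed.

Lemma colker_retract m n k p (f : 'M[F]_(m, n)) (i : 'M[F]_(n, k)) L (B : 'M[F]_(n, p)) :
  (forall v : 'cV_n, f *m v = 0 -> exists w, v = i *m w) -> L *m i = 1%:M ->
  f *m B = 0 -> i *m (L *m B) = B.
Proof.
move=> ex_i Li fB0; apply: eq_mx_cV => v.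
have [w Bv] : exists w, B *m v = i *m w by apply: ex_i; rewrite mulmxA fB0 mul0mx.
by rewrite -!mulmxA Bv (mulmxA L) Li mul1mx.
Qed.

Lemma colcoker_retract m n c q (f : 'M[F]_(m, n)) (p : 'M[F]_(c, m)) R (N : 'M[F]_(q, m)) :
  (forall v : 'cV_m, p *m v = 0 -> exists u, v = f *m u) -> p *m R = 1%:M ->
  N *m f = 0 -> N *m R *m p = N.
Proof.
move=> ex_p pR Nf0; apply: eq_mx_cV => v.
have [u vu] : exists u, R *m (p *m v) - v = f *m u.
  by apply: ex_p; rewrite mulmxBr !mulmxA pR mul1mx subrr.
by apply/eqP; rewrite -subr_eq0 -!mulmxA -mulmxBr vu mulmxA Nf0 mul0mx.
Qed.

End MatrixMaps.

Section Modules.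
Variables (F : fieldType) (A : falgType F).
Implicit Types X Y Z K C E S : fmod A.

Lemma factB X a b : fact X (a - b) = fact X a - fact X b.
Proof. by rewrite addrC -scaleN1r fact_linear scaleN1r addrC. Qed.

Lemma fact0 X : fact X 0 = 0.
Proof. by rewrite -(subrr 0) factB subrr. Qed.

Lemma is_hom_mul X Y Z f g : is_hom X Y f -> is_hom Y Z g -> is_hom X Z (g *m f).
Proof. by move=> hf hg a; rewrite -mulmxA hf !mulmxA hg. Qed.

Lemma is_hom1 X : is_hom X X 1%:M.
Proof. by move=> a; rewrite mul1mx mulmx1. Qed.

Lemma iso_refl X : iso X X.
Proof. by exists 1%:M, 1%:M; split; rewrite ?mulmx1 //; apply: is_hom1. Qed.

Lemma iso_sym X Y : iso X Y -> iso Y X.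
Proof. by case=> f [g [? ? ? ?]]; exists g, f; split. Qed.

Lemma iso_fdim X Y : iso X Y -> fdim X = fdim Y.
Proof.
case=> f [g [_ _ gf fg]].
have /injmx_leq le_XY : injmx f by apply/injmx_full/row_fullP; exists g.
have /injmx_leq le_YX : injmx g by apply/injmx_full/row_fullP; exists f.
by apply/eqP; rewrite eqn_leq le_XY le_YX.
Qed.

Lemma iso_dim0 X Y : fdim X = 0%N -> fdim Y = 0%N -> iso X Y.
Proof.
move=> X0 Y0; exists 0, 0.
by split=> [a|a||]; rewrite ?mul0mx ?mulmx0 //; apply: flatmx_eq.
Qed.

Lemma bij_hom_iso X Y f : is_hom X Y f -> injmx f -> surjmx f -> iso X Y.
Proof.
move=> hf /injmx_full/row_fullP[g gf] /surjmx_free/row_freeP[g' fg'].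
have g'g : g' = g by rewrite -[g']mul1mx -gf -mulmxA fg' mulmx1.
subst g'; exists f, g; split => // a.
by rewrite -[LHS]mulmx1 -fg' !mulmxA -(mulmxA g) -hf mulmxA gf mul1mx.
Qed.

Lemma kernel_exists X Y f : is_hom X Y f -> exists K k, is_kernel X Y f K k.
Proof.
move=> hf; have [k [i [inj_i fi0 ex_i]]] := colker_exists f.
have /injmx_full/row_fullP[L Li] := inj_i.
have stable a : i *m (L *m (fact X a *m i)) = fact X a *m i.
  by apply: colker_retract ex_i Li _; rewrite mulmxA hf -mulmxA fi0 mulmx0.
have lin : linear (fun a => L *m fact X a *m i).
  by move=> r a b /=; rewrite fact_linear mulmxDr mulmxDl -scalemxAr -scalemxAl.
have mul a b : L *m fact X (a * b) *m i = (L *m fact X a *m i) *m (L *m fact X b *m i).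
  by rewrite fact_mul -!mulmxA stable.
have one : L *m fact X 1 *m i = 1%:M by rewrite fact_one mulmx1.
by exists (FMod lin mul one), i; split=> // a /=; rewrite -!mulmxA stable.
Qed.

Lemma cokernel_exists X Y f : is_hom X Y f -> exists C c, is_cokernel X Y f C c.
Proof.
move=> hf; have [k [p [surj_p pf0 ex_p]]] := colcoker_exists f.
have /surjmx_free/row_freeP[R pR] := surj_p.
have stable a : p *m fact Y a *m R *m p = p *m fact Y a.
  by apply: colcoker_retract ex_p pR _; rewrite -mulmxA -hf mulmxA pf0 mul0mx.
have lin : linear (fun a => p *m fact Y a *m R).
  by move=> r a b /=; rewrite fact_linear mulmxDr mulmxDl -scalemxAr -scalemxAl.
have mul a b : p *m fact Y (a * b) *m R = (p *m fact Y a *m R) *m (p *m fact Y b *m R).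
  by rewrite fact_mul !mulmxA stable.
have one : p *m fact Y 1 *m R = 1%:M by rewrite fact_one mulmx1.
by exists (FMod lin mul one), p; split=> // a /=; rewrite stable.
Qed.

Lemma kernel_factor X Y Z f K k g : is_kernel X Y f K k -> is_hom Z X g ->
  f *m g = 0 -> exists g', is_hom Z K g' /\ g = k *m g'.
Proof.
case=> hk inj_k _ ex_k hg fg0; have /injmx_full/row_fullP[L Lk] := inj_k.
have kLg : k *m (L *m g) = g by apply: colker_retract ex_k Lk fg0.
exists (L *m g); split=> // a; apply: (injmx_inj inj_k).
by rewrite !mulmxA -(mulmxA k) kLg hg hk -!mulmxA kLg.
Qed.

Lemma cokernel_factor X Y Z f C c g : is_cokernel X Y f C c -> is_hom Y Z g ->
  g *m f = 0 -> exists g', is_hom C Z g' /\ g = g' *m c.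
Proof.
case=> hc surj_c _ ex_c hg gf0; have /surjmx_free/row_freeP[R cR] := surj_c.
have gRc : g *m R *m c = g by apply: colcoker_retract ex_c cR gf0.
exists (g *m R); split=> // a; apply: (surjmx_inj surj_c).
by rewrite -mulmxA -hc mulmxA gRc hg -mulmxA gRc.
Qed.

Lemma cokernel_iso X Y f C C' c c' :
  is_cokernel X Y f C c -> is_cokernel X Y f C' c' -> iso C C'.
Proof.
move=> cokC cokC'; have [[hc surj_c cf0 _] [hc' surj_c' c'f0 _]] := (cokC, cokC').
have [g [hg c'E]] := cokernel_factor cokC hc' c'f0.
have [g' [hg' cE]] := cokernel_factor cokC' hc cf0.
exists g, g'; split => //.
  by apply: (surjmx_inj surj_c); rewrite mul1mx -mulmxA -c'E.
by apply: (surjmx_inj surj_c'); rewrite mul1mx -mulmxA -cE.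
Qed.

Lemma short_exact_kernel X E Y i p : short_exact X E Y i p -> is_kernel E Y p X i.
Proof. by case=> ? ? ? ? []. Qed.

Lemma short_exact_cokernel X E Y i p : short_exact X E Y i p -> is_cokernel X E i Y p.
Proof. by case=> ? ? ? ? []. Qed.

Lemma cokernel_short_exact X Y C f c :
  is_hom X Y f -> injmx f -> is_cokernel X Y f C c -> short_exact X Y C f c.
Proof. by move=> hf inj_f [? ? ? ?]; split => //; split. Qed.

Lemma short_exact_iso X E E' Y i p f g : short_exact X E Y i p ->
  is_hom E E' f -> is_hom E' E g -> g *m f = 1%:M -> f *m g = 1%:M ->
  short_exact X E' Y (f *m i) (p *m g).
Proof.
case=> hi hp inj_i surj_p [pi0 ex_i] hf hg gf fg; split.
- exact: is_hom_mul hi hf.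
- exact: is_hom_mul hg hp.
- by apply: injmx_mul _ inj_i; apply/injmx_full/row_fullP; exists g.
- by apply: surjmx_mul surj_p _; apply/surjmx_free/row_freeP; exists f.
split; first by rewrite mulmxA -(mulmxA p) gf mulmx1.
move=> v; rewrite -mulmxA => /ex_i[u gv].
by exists u; rewrite -mulmxA -gv mulmxA fg mul1mx.
Qed.

Lemma cokernel_mul_surj X Z Y C g u c :
  surjmx u -> is_cokernel X Y (g *m u) C c -> is_cokernel Z Y g C c.
Proof.
move=> surj_u [hc surj_c cgu0 ex_c]; split=> // [|v /ex_c[w ->]].
  by apply: (surjmx_inj surj_u); rewrite mul0mx -mulmxA.
by exists (u *m w); rewrite mulmxA.
Qed.

Lemma kernel_mul_short_exact S X X' Y K K' i q g k k' :
  short_exact S X X' i q -> is_kernel X Y (g *m q) K k -> is_kernel X' Y g K' k' ->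
  exists i' r, short_exact S K K' i' r.
Proof.
move=> [hi hq inj_i surj_q [qi0 ex_i]] kerK kerK'.
have [hk inj_k gqk0 ex_k] := kerK; have [_ inj_k' gk'0 _] := kerK'.
have [i' [hi' iE]] : exists i', is_hom S K i' /\ i = k *m i'.
  by apply: kernel_factor kerK hi _; rewrite -mulmxA qi0 mulmx0.
have [r [hr rE]] : exists r, is_hom K K' r /\ q *m k = k' *m r.
  by apply: kernel_factor kerK' (is_hom_mul hk hq) _; rewrite mulmxA gqk0.
exists i', r; split => //.
- by move=> w i'w0; apply: inj_i; rewrite iE -mulmxA i'w0 mulmx0.
- move=> w'; have [x qx] := surj_q (k' *m w').
  have [w xE] : exists w, x = k *m w.
    by apply: ex_k; rewrite -mulmxA qx mulmxA gk'0 mul0mx.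
  by exists w; apply: (injmx_inj inj_k'); rewrite mulmxA -rE -mulmxA -xE qx.
split; first by apply: (injmx_inj inj_k'); rewrite mulmxA -rE -mulmxA -iE qi0 mulmx0.
move=> w rw0; have [s ks] : exists s, k *m w = i *m s.
  by apply: ex_i; rewrite mulmxA rE -mulmxA rw0 mulmx0.
by exists s; apply: (injmx_inj inj_k); rewrite ks iE mulmxA.
Qed.

Lemma kernel_quotient S X X' Y C1 K i q f f' c1 k :
  short_exact S X X' i q -> injmx (f *m i) -> is_cokernel S Y (f *m i) C1 c1 ->
  c1 *m f = f' *m q -> is_kernel X Y f K k -> is_kernel X' C1 f' K (q *m k).
Proof.
move=> [_ hq _ surj_q [qi0 ex_i]] inj_fi [_ _ _ ex_c1] c1f [hk inj_k fk0 ex_k].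
split; first exact: is_hom_mul hk hq.
- move=> w; rewrite -mulmxA => /ex_i[s ks].
  have /inj_fi s0 : f *m i *m s = 0 by rewrite -mulmxA -ks mulmxA fk0 mul0mx.
  by apply: inj_k; rewrite ks s0 mulmx0.
- by rewrite mulmxA -c1f -mulmxA fk0 mulmx0.
move=> x' f'x'0; have [x qx] := surj_q x'.
have [s fx] : exists s, f *m x = f *m i *m s.
  by apply: ex_c1; rewrite mulmxA c1f -mulmxA qx f'x'0.
have [w xE] : exists w, x - i *m s = k *m w.
  by apply: ex_k; rewrite mulmxBr fx mulmxA subrr.
by exists w; rewrite -mulmxA -xE mulmxBr mulmxA qi0 mul0mx subr0 qx.
Qed.

Lemma cokernel_quotient S X X' Y C1 C i q f f' c1 c :
  short_exact S X X' i q -> is_cokernel S Y (f *m i) C1 c1 ->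
  c1 *m f = f' *m q -> is_cokernel X Y f C c -> exists c', is_cokernel X' C1 f' C c'.
Proof.
move=> [_ _ _ surj_q _] cokC1 c1f [hc surj_c cf0 ex_c].
have [c' [hc' cE]] : exists c', is_hom C1 C c' /\ c = c' *m c1.
  by apply: cokernel_factor cokC1 hc _; rewrite mulmxA cf0 mul0mx.
have [_ surj_c1 _ _] := cokC1.
exists c'; split => //.
- by move=> w; have [v <-] := surj_c w; exists (c1 *m v); rewrite mulmxA -cE.
- by apply: (surjmx_inj surj_q); rewrite mul0mx -mulmxA -c1f mulmxA -cE cf0.
move=> v; have [y <-] := surj_c1 v; rewrite mulmxA -cE => /ex_c[u ->].
by exists (q *m u); rewrite !mulmxA c1f.
Qed.

Lemma cokernel_short_exact_sub T Y Y' S C C' t q h c c' :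
  short_exact T Y Y' t q -> injmx (q *m h) ->
  is_cokernel S Y h C c -> is_cokernel S Y' (q *m h) C' c' ->
  exists r, short_exact T C C' (c *m t) r.
Proof.
move=> [ht hq inj_t surj_q [qt0 ex_t]] inj_qh cokC cokC'.
have [hc surj_c ch0 ex_c] := cokC; have [hc' surj_c' c'qh0 ex_c'] := cokC'.
have [r [hr rE]] : exists r, is_hom C C' r /\ c' *m q = r *m c.
  by apply: cokernel_factor cokC (is_hom_mul hq hc') _; rewrite -mulmxA.
exists r; split => //.
- exact: is_hom_mul ht hc.
- move=> x; rewrite -mulmxA => /ex_c[s ts].
  have /inj_qh s0 : q *m h *m s = 0 by rewrite -mulmxA -ts mulmxA qt0 mul0mx.
  by apply: inj_t; rewrite ts s0 mulmx0.
- move=> w; have [y' <-] := surj_c' w; have [y <-] := surj_q y'.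
  by exists (c *m y); rewrite !mulmxA rE.
split; first by rewrite mulmxA -rE -mulmxA qt0 mulmx0.
move=> z rz0; have [y yE] := surj_c z.
have [u qy] : exists u, q *m y = q *m h *m u.
  by apply: ex_c'; rewrite mulmxA rE -mulmxA yE.
have [x yx] : exists x, y - h *m u = t *m x.
  by apply: ex_t; rewrite mulmxBr qy mulmxA subrr.
by exists x; rewrite -yE -mulmxA -yx mulmxBr mulmxA ch0 mul0mx subr0.
Qed.

Lemma short_exact_quotient S X X' E E' Y j q i p c :
  short_exact X E Y i p -> short_exact S X X' j q -> is_cokernel S E (i *m j) E' c ->
  exists i' p', short_exact X' E' Y i' p'.
Proof.
move=> [hi hp inj_i surj_p [pi0 ex_i]] sesX cokE'.
have [_ _ _ surj_q [qj0 _]] := sesX; have [hc surj_c cij0 ex_c] := cokE'.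
have [i' [hi' ciE]] : exists i', is_hom X' E' i' /\ c *m i = i' *m q.
  apply: cokernel_factor (short_exact_cokernel sesX) (is_hom_mul hi hc) _.
  by rewrite -mulmxA.
have [p' [hp' pE]] : exists p', is_hom E' Y p' /\ p = p' *m c.
  by apply: cokernel_factor cokE' hp _; rewrite mulmxA pi0 mul0mx.
exists i', p'; split => //.
- move=> x'; have [x <-] := surj_q x'; rewrite mulmxA -ciE -mulmxA => /ex_c[s].
  by rewrite -mulmxA => /(injmx_inj inj_i) ->; rewrite mulmxA qj0 mul0mx.
- by move=> w; have [v <-] := surj_p w; exists (c *m v); rewrite mulmxA -pE.
split.
  by apply: (surjmx_inj surj_q); rewrite -mulmxA -ciE mulmxA -pE pi0 !mul0mx.
move=> e'; have [e <-] := surj_c e'; rewrite mulmxA -pE => /ex_i[x ->].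
by exists (q *m x); rewrite !mulmxA ciE.
Qed.

End Modules.

Section WideSubcategories.
Variables (F : fieldType) (A : falgType F).
Implicit Types (M W S T U : subcat A) (D Fam : subcat A -> Prop).

Lemma wide_eq W W' : wide W -> subcat_eq W W' -> wide W'.
Proof.
move=> [isoW kerW cokerW extW] eqW; split.
- by move=> X Y isoXY /eqW WX; apply/eqW; apply: isoW isoXY WX.
- by move=> X Y f /eqW WX /eqW WY hf K k kerK; apply/eqW; apply: kerW WX WY hf K k kerK.
- by move=> X Y f /eqW WX /eqW WY hf C c cokC; apply/eqW; apply: cokerW WX WY hf C c cokC.
- by move=> X E Y i p sesE /eqW WX /eqW WY; apply/eqW; apply: extW sesE WX WY.
Qed.

Lemma wide_bigcap Fam :
  (forall W, Fam W -> wide W) -> wide (fun X => forall W, Fam W -> W X).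
Proof.
move=> wideFam; split.
- move=> X Y isoXY WX W FamW; have [isoW _ _ _] := wideFam W FamW.
  exact: isoW isoXY (WX W FamW).
- move=> X Y f WX WY hf K k kerK W FamW; have [_ kerW _ _] := wideFam W FamW.
  exact: kerW (WX W FamW) (WY W FamW) hf K k kerK.
- move=> X Y f WX WY hf C c cokC W FamW; have [_ _ cokerW _] := wideFam W FamW.
  exact: cokerW (WX W FamW) (WY W FamW) hf C c cokC.
- move=> X E Y i p sesE WX WY W FamW; have [_ _ _ extW] := wideFam W FamW.
  exact: extW sesE (WX W FamW) (WY W FamW).
Qed.

Lemma wide_capS W1 W2 : wide W1 -> wide W2 -> wide (capS W1 W2).
Proof.
move=> wide1 wide2.
apply: (wide_eq (wide_bigcap (Fam := fun W => W = W1 \/ W = W2) _)) => [W [->|->] //|X].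
by split=> [capX | [W1X W2X] W [->|->] //]; split; apply: capX; [left | right].
Qed.

Lemma wide_dim0 W Y X : wide W -> W Y -> fdim X = 0%N -> W X.
Proof.
move=> [isoW kerW _ _] WY X0; have [K [k kerK]] := kernel_exists (is_hom1 Y).
apply: isoW (kerW _ _ _ WY WY (is_hom1 Y) _ _ kerK); apply: (iso_dim0 _ X0).
have [_ inj_k k0 _] := kerK; rewrite mul1mx in k0.
by move: inj_k; rewrite k0 => /injmx0.
Qed.

Lemma widshad_sub M S : widshad M S -> subcat_le S M.
Proof. by case=> W [_ eqS] X /eqS[]. Qed.

Lemma widshad_capS M S1 S2 : widshad M S1 -> widshad M S2 -> widshad M (capS S1 S2).
Proof.
case=> W1 [wide1 eq1] [W2 [wide2 eq2]]; exists (capS W1 W2); split; first exact: wide_capS.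
by move=> X; have := eq1 X; have := eq2 X; rewrite /capS; tauto.
Qed.

Lemma widshad_glb M Fam :
  (forall S, Fam S -> widshad M S) -> exists S, is_glb (widshad M) Fam S.
Proof.
move=> shadFam.
pose realizes W := exists T, [/\ Fam T, wide W & subcat_eq T (capS W M)].
pose W0 X := forall W, realizes W -> W X.
have wideW0 : wide W0 by apply: wide_bigcap => W [T []].
exists (capS W0 M); split; first by exists W0.
- move=> T FamT X [W0X MX]; have [W [wideW eqT]] := shadFam T FamT.
  by apply/eqT; split=> //; apply: W0X; exists T.
- move=> U shadU lbU X UX; split; last exact: widshad_sub shadU X UX.
  by move=> W [T [FamT _ /(_ X) eqT]]; have /eqT[] := lbU T FamT X UX.
Qed.

Lemma glb_complete_lattice D :
  (forall Fam, (forall T, Fam T -> D T) -> exists S, is_glb D Fam S) ->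
  complete_lattice D.
Proof.
move=> glbD Fam FamD; split; last exact: glbD.
pose ub U := D U /\ forall T, Fam T -> subcat_le T U.
have [S [DS lbS glbS]] := glbD ub (fun U ubU => proj1 ubU).
exists S; split=> // [T FamT | U DU ubU]; last exact: lbS.
by apply: glbS => [|U [_ ubU]]; [exact: FamD | exact: ubU].
Qed.

Lemma complete_lattice_widshad M : complete_lattice (widshad M).
Proof. by apply: glb_complete_lattice => Fam; apply: widshad_glb. Qed.

Lemma is_meet_capS D x y m :
  D (capS x y) -> is_meet D x y m -> subcat_eq m (capS x y).
Proof.
move=> Dxy [_ lb glb] X; split=> [mX | xyX]; first by split; apply: lb mX; [left | right].
by apply: glb xyX => // T [->|->] Z [].
Qed.

Lemma capS_is_meet D x y m : D m -> subcat_eq m (capS x y) -> is_meet D x y m.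
Proof.
move=> Dm eqm; split=> // [T [->|->] X /eqm[] // | U _ lbU X UX].
by apply/eqm; split; apply: lbU UX; [left | right].
Qed.

End WideSubcategories.

Lemma meet_map_capS (F : fieldType) (A B : falgType F)
    (D1 : subcat A -> Prop) (D2 : subcat B -> Prop) (f : subcat A -> subcat B) :
  (forall x, D1 x -> D2 (f x)) -> (forall x y, D1 x -> D1 y -> D1 (capS x y)) ->
  (forall x y, subcat_eq x y -> subcat_eq (f x) (f y)) ->
  (forall x y, subcat_eq (f (capS x y)) (capS (f x) (f y))) -> meet_map D1 D2 f.
Proof.
move=> fD capD1 f_eq f_capS; split=> // x y m Dx Dy meet_m; have [Dm _ _] := meet_m.
have /f_eq eq_fm := is_meet_capS (capD1 _ _ Dx Dy) meet_m.
by apply: capS_is_meet (fD _ Dm) _ => X; split=> [/eq_fm/f_capS | /f_capS/eq_fm].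
Qed.

Section SimpleFiltrations.
Variables (F : fieldType) (A : falgType F) (P : subcat A).
Hypotheses (P_ker : kernel_closed P) (P_coker : cokernel_closed P).
Implicit Types X Y K C E S T : fmod A.

Definition simple_in X : Prop :=
  [/\ P X, (0 < fdim X)%N &
      forall K k, P K -> is_hom K X k -> injmx k -> (0 < fdim K)%N -> surjmx k].

Fixpoint filtn (n : nat) X : Prop :=
  if n is n'.+1 then
    exists S X' i p, [/\ simple_in S, short_exact S X X' i p & filtn n' X']
  else fdim X = 0%N.

Definition Filt X : Prop := exists n, filtn n X.

Lemma simple_hom_inj X Y f : simple_in X -> P Y -> is_hom X Y f -> f != 0 -> injmx f.
Proof.
move=> [PX _ simX] PY hf f_neq0; have [K [k kerK]] := kernel_exists hf.
have PK := P_ker PX PY hf kerK; have [hk inj_k fk0 ex_k] := kerK.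
have [K0 | K_gt0] := posnP (fdim K).
  by move=> v /ex_k[w ->]; rewrite (flatmx_eq w 0 K0) mulmx0.
case/eqP: f_neq0; apply: (surjmx_inj (simX K k PK hk inj_k K_gt0)).
by rewrite fk0 mul0mx.
Qed.

Lemma simple_hom_surj X Y f : P X -> simple_in Y -> is_hom X Y f -> f != 0 -> surjmx f.
Proof.
move=> PX [PY _ simY] hf f_neq0; have [C [c cokC]] := cokernel_exists hf.
have PC := P_coker PX PY hf cokC; have [hc _ cf0 ex_c] := cokC.
have [I [j kerI]] := kernel_exists hc.
have PI := P_ker PY PC hc kerI; have [hj inj_j cj0 ex_j] := kerI.
have [I0 | I_gt0] := posnP (fdim I).
  case/eqP: f_neq0; apply: eq_mx_cV => u; rewrite mul0mx.
  have [w ->] : exists w, f *m u = j *m w by apply: ex_j; rewrite mulmxA cf0 mul0mx.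
  by rewrite (flatmx_eq w 0 I0) mulmx0.
have c0 : c = 0.
  by apply: (surjmx_inj (simY I j PI hj inj_j I_gt0)); rewrite cj0 mul0mx.
move=> v; have [u ->] : exists u, v = f *m u by apply: ex_c; rewrite c0 mul0mx.
by exists u.
Qed.

Lemma filtn_iso n X Y : iso X Y -> filtn n X -> filtn n Y.
Proof.
case: n => [|n] /= isoXY; first by rewrite (iso_fdim isoXY).
case=> S [X' [i [p [simS sesX filtX']]]]; case: isoXY => f [g [hf hg gf fg]].
by exists S, X', (f *m i), (p *m g); split => //; apply: short_exact_iso.
Qed.

Lemma Filt_iso X Y : iso X Y -> Filt X -> Filt Y.
Proof. by move=> isoXY [n filtX]; exists n; apply: filtn_iso filtX. Qed.

Lemma Filt_ext n X E Y i p : short_exact X E Y i p -> filtn n X -> Filt Y -> Filt E.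
Proof.
elim: n X E Y i p => [|n IHn] X E Y i p sesE /=.
  move=> X0; apply: Filt_iso; apply: iso_sym.
  have [_ hp _ surj_p [_ ex_i]] := sesE; apply: bij_hom_iso hp _ surj_p.
  by move=> v /ex_i[u ->]; rewrite (flatmx_eq u 0 X0) mulmx0.
case=> S [X' [j [q [simS sesX filtX']]]] FiltY.
have [hi _ inj_i _ _] := sesE; have [hj _ inj_j _ _] := sesX.
have [E' [c cokE']] := cokernel_exists (is_hom_mul hj hi).
have [i' [p' sesE']] := short_exact_quotient sesE sesX cokE'.
have [m filtE'] := IHn _ _ _ _ _ sesE' filtX' FiltY.
exists m.+1, S, E', (i *m j), c; split => //.
exact: cokernel_short_exact (is_hom_mul hj hi) (injmx_mul inj_i inj_j) cokE'.
Qed.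

Lemma simple_hom_filt m Y S h : filtn m Y -> simple_in S -> is_hom S Y h -> h != 0 ->
  injmx h /\ forall C c, is_cokernel S Y h C c -> Filt C.
Proof.
elim: m Y h => [|m IHm] Y h /=; first by move=> Y0 _ _; rewrite (flatmx_eq h 0 Y0) eqxx.
case=> T [Y' [t [q [simT sesY filtY']]]] simS hh h_neq0.
have [_ hq inj_t _ _] := sesY; have [PS _ _] := simS; have [PT _ _] := simT.
(* Either h lands in the bottom factor T, and is then an isomorphism S ~ T by
   Schur's lemma, or h survives in Y' = Y / T and we recurse. *)
have [qh0 | qh_neq0] := eqVneq (q *m h) 0.
  have [h' [hh' hE]] := kernel_factor (short_exact_kernel sesY) hh qh0.
  have h'_neq0 : h' != 0 by apply: contraNneq h_neq0 => h'0; rewrite hE h'0 mulmx0.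
  have inj_h' := simple_hom_inj simS PT hh' h'_neq0.
  have surj_h' := simple_hom_surj PS simT hh' h'_neq0.
  split=> [|C c]; first by rewrite hE; apply: injmx_mul.
  rewrite hE => /(cokernel_mul_surj surj_h') cokC; exists m; apply: filtn_iso filtY'.
  exact: cokernel_iso (short_exact_cokernel sesY) cokC.
have [inj_qh FiltC'] := IHm _ _ filtY' simS (is_hom_mul hh hq) qh_neq0.
split=> [w hw0 | C c cokC]; first by apply: inj_qh; rewrite -mulmxA hw0 mulmx0.
have [C' [c' cokC']] := cokernel_exists (is_hom_mul hh hq).
have [m' filtC'] := FiltC' _ _ cokC'.
have [r sesC] := cokernel_short_exact_sub sesY inj_qh cokC cokC'.
by exists m'.+1, T, C', (c *m t), r.
Qed.

Lemma filt_ker_coker n X Y f : filtn n X -> Filt Y -> is_hom X Y f ->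
  (forall K k, is_kernel X Y f K k -> Filt K) /\
  (forall C c, is_cokernel X Y f C c -> Filt C).
Proof.
elim: n X Y f => [|n IHn] X Y f /=.
  move=> X0 FiltY hf; split=> [K k [_ inj_k _ _] | C c [hc surj_c _ ex_c]].
    by exists 0%N => /=; apply/eqP; rewrite -leqn0 -X0 (injmx_leq inj_k).
  apply: Filt_iso FiltY; apply: bij_hom_iso hc _ surj_c.
  by move=> v /ex_c[u ->]; rewrite (flatmx_eq u 0 X0) mulmx0.
case=> S [X' [i [q [simS sesX filtX']]]] FiltY hf.
have [hi _ _ surj_q _] := sesX; have cokX' := short_exact_cokernel sesX.
(* Either f kills the bottom factor S and factors through X' = X / S, or it
   embeds S into Y and induces f' : X' -> Y / S with the same kernel and
   cokernel. *)
have [fi0 | fi_neq0] := eqVneq (f *m i) 0.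
  have [g [hg fE]] := cokernel_factor cokX' hf fi0; subst f.
  have [IHker IHcoker] := IHn _ _ _ filtX' FiltY hg.
  split=> [K k kerK | C c /(cokernel_mul_surj surj_q)]; last exact: IHcoker.
  have [K' [k' kerK']] := kernel_exists hg.
  have [i' [r sesK]] := kernel_mul_short_exact sesX kerK kerK'.
  have [m filtK'] := IHker _ _ kerK'.
  by exists m.+1, S, K', i', r.
have [m filtY] := FiltY.
have [inj_fi FiltC1] := simple_hom_filt filtY simS (is_hom_mul hi hf) fi_neq0.
have [C1 [c1 cokC1]] := cokernel_exists (is_hom_mul hi hf).
have [hc1 _ c1fi0 _] := cokC1.
have [f' [hf' c1fE]] : exists f', is_hom X' C1 f' /\ c1 *m f = f' *m q.
  by apply: cokernel_factor cokX' (is_hom_mul hf hc1) _; rewrite -mulmxA.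
have [IHker IHcoker] := IHn _ _ _ filtX' (FiltC1 _ _ cokC1) hf'.
split=> [K k kerK | C c cokC].
  exact: IHker _ _ (kernel_quotient sesX inj_fi cokC1 c1fE kerK).
by have [c' /IHcoker] := cokernel_quotient sesX cokC1 c1fE cokC.
Qed.

Lemma Filt_wide : wide Filt.
Proof.
split.
- by move=> X Y; apply: Filt_iso.
- by move=> X Y f [n filtX] FiltY hf; apply: (filt_ker_coker filtX FiltY hf).1.
- by move=> X Y f [n filtX] FiltY hf; apply: (filt_ker_coker filtX FiltY hf).2.
- by move=> X E Y i p sesE [n filtX]; apply: Filt_ext sesE filtX.
Qed.

Lemma simple_subobject X : P X -> (0 < fdim X)%N ->
  exists S i, [/\ simple_in S, is_hom S X i & injmx i].
Proof.
have [d le_Xd] : exists d, (fdim X <= d)%N by exists (fdim X).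
elim: d X le_Xd => [|d IHd] X le_Xd PX X_gt0; first by move: le_Xd; rewrite leqNgt X_gt0.
have [simX | not_simX] := classic (simple_in X).
  by exists X, 1%:M; split=> // [|w]; [apply: is_hom1 | rewrite mul1mx].
have [K [k [PK hk inj_k K_gt0 not_surj]]] : exists K k,
    [/\ P K, is_hom K X k, injmx k, (0 < fdim K)%N & ~ surjmx k].
  apply: NNPP => no_K; apply: not_simX; split=> // K k PK hk inj_k K_gt0.
  by apply: NNPP => not_surj; apply: no_K; exists K, k.
have le_Kd : (fdim K <= d)%N by rewrite -ltnS (leq_trans (injmx_ltn inj_k not_surj)).
have [S [i [simS hi inj_i]]] := IHd K le_Kd PK K_gt0.
by exists S, (k *m i); split; [| apply: is_hom_mul hi hk | apply: injmx_mul].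
Qed.

Lemma P_Filt X : P X -> Filt X.
Proof.
have [d le_Xd] : exists d, (fdim X <= d)%N by exists (fdim X).
elim: d X le_Xd => [|d IHd] X le_Xd PX.
  by exists 0%N => /=; apply/eqP; rewrite -leqn0.
have [X0 | X_gt0] := posnP (fdim X); first by exists 0%N.
have [S [i [simS hi inj_i]]] := simple_subobject PX X_gt0.
have [PS S_gt0 _] := simS; have [C [c cokC]] := cokernel_exists hi.
have lt_CX : (fdim C < fdim X)%N.
  have [_ surj_c ci0 _] := cokC; apply: (surjmx_ltn surj_c) => inj_c.
  have i0 : i = 0 by apply: (injmx_inj inj_c); rewrite ci0 mulmx0.
  by move: inj_i S_gt0; rewrite i0 => /injmx0 ->.
have le_Cd : (fdim C <= d)%N by rewrite -ltnS (leq_trans lt_CX).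
have [m filtC] := IHd C le_Cd (P_coker PS PX hi cokC).
by exists m.+1, S, C, i, c; split=> //; apply: cokernel_short_exact.
Qed.

End SimpleFiltrations.

Section Restriction.
Variables (F : fieldType) (Gam Lam : falgType F) (phi : {lrmorphism Gam -> Lam}).
Implicit Types X Y K C E : fmod Lam.

Lemma res_hom X Y f : is_hom X Y f -> is_hom (res phi X) (res phi Y) f.
Proof. by move=> hf a; apply: hf. Qed.

Lemma res_iso X Y : iso X Y -> iso (res phi X) (res phi Y).
Proof. by case=> f [g [? ? ? ?]]; exists f, g; split=> //; apply: res_hom. Qed.

Lemma res_kernel X Y K f k :
  is_kernel X Y f K k -> is_kernel (res phi X) (res phi Y) f (res phi K) k.
Proof. by case=> ? ? ? ?; split=> //; apply: res_hom. Qed.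

Lemma res_cokernel X Y C f c :
  is_cokernel X Y f C c -> is_cokernel (res phi X) (res phi Y) f (res phi C) c.
Proof. by case=> ? ? ? ?; split=> //; apply: res_hom. Qed.

Lemma res_short_exact X E Y i p :
  short_exact X E Y i p -> short_exact (res phi X) (res phi E) (res phi Y) i p.
Proof. by case=> ? ? ? ? ?; split=> //; apply: res_hom. Qed.

Lemma modL_res Y : modL phi (res phi Y).
Proof. by exists Y; apply: iso_refl. Qed.

Lemma wide_restrL (W : subcat Gam) : wide W -> wide (restrL phi W).
Proof.
move=> [isoW kerW cokerW extW]; split.
- by move=> X Y isoXY; apply: isoW (res_iso isoXY).
- move=> X Y f WX WY hf K k kerK.
  exact: kerW WX WY (res_hom hf) _ _ (res_kernel kerK).
- move=> X Y f WX WY hf C c cokC.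
  exact: cokerW WX WY (res_hom hf) _ _ (res_cokernel cokC).
- by move=> X E Y i p sesE; apply: extW (res_short_exact sesE).
Qed.

Lemma widshad_restrL (M S : subcat Gam) :
  subcat_le (modL phi) M -> widshad M S -> wide (restrL phi S).
Proof.
move=> modL_M [W [wideW eqS]]; apply: (wide_eq (wide_restrL wideW)) => Y.
by split=> [WY | /eqS[] //]; apply/eqS; split=> //; apply/modL_M/modL_res.
Qed.

End Restriction.

Section Inflation.
Variables (F : fieldType) (Gam Lam : falgType F) (phi : {lrmorphism Gam -> Lam}).
Hypothesis phi_surj : forall y : Lam, exists x : Gam, phi x = y.
Implicit Types X Y K C E : fmod Gam.

Definition ker_ann X : Prop := forall a, phi a = 0 -> fact X a = 0.

Lemma ker_ann_fact X a b : ker_ann X -> phi a = phi b -> fact X a = fact X b.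
Proof.
move=> annX eq_ab; apply/eqP; rewrite -subr_eq0 -factB annX //.
by apply/eqP; rewrite raddfB subr_eq0; apply/eqP.
Qed.

Lemma phi_surjb y : exists x, phi x == y.
Proof. by have [x <-] := phi_surj y; exists x. Qed.

Definition phi_pre y : Gam := xchoose (phi_surjb y).

Lemma phi_preK y : phi (phi_pre y) = y.
Proof. exact/eqP/(xchooseP (phi_surjb y)). Qed.

Section Descend.
Variables (X : fmod Gam) (annX : ker_ann X).

Lemma descend_linear : linear (fun y => fact X (phi_pre y)).
Proof.
move=> r y z /=; rewrite -fact_linear; apply: ker_ann_fact => //.
by rewrite phi_preK linearP; congr (_ *: _ + _); apply/esym/phi_preK.
Qed.

Lemma descend_mul y z :
  fact X (phi_pre (y * z)) = fact X (phi_pre y) *m fact X (phi_pre z).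
Proof.
rewrite -fact_mul; apply: ker_ann_fact => //.
by rewrite phi_preK rmorphM; congr (_ * _); apply/esym/phi_preK.
Qed.

Lemma descend_one : fact X (phi_pre 1) = 1%:M.
Proof. by rewrite -(fact_one X); apply: ker_ann_fact => //; rewrite phi_preK rmorph1. Qed.

Definition descend : fmod Lam := FMod descend_linear descend_mul descend_one.

End Descend.

Lemma descend_hom X Y (annX : ker_ann X) (annY : ker_ann Y) f :
  is_hom X Y f -> is_hom (descend annX) (descend annY) f.
Proof. by move=> hf y; apply: hf. Qed.

Lemma ker_ann_sub K X k : is_hom K X k -> injmx k -> ker_ann X -> ker_ann K.
Proof.
move=> hk inj_k annX a phia0; apply: (injmx_inj inj_k).
by rewrite hk annX // mul0mx mulmx0.
Qed.

Lemma ker_ann_quot Y C c : is_hom Y C c -> surjmx c -> ker_ann Y -> ker_ann C.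
Proof.
move=> hc surj_c annY a phia0; apply: (surjmx_inj surj_c).
by rewrite -hc annY // mulmx0 mul0mx.
Qed.

Lemma ker_ann_res (Y : fmod Lam) : ker_ann (res phi Y).
Proof. by move=> a /= ->; apply: fact0. Qed.

Variable V : subcat Lam.
Hypothesis wideV : wide V.

Definition inflation : subcat Gam := fun X => exists annX : ker_ann X, V (descend annX).

Lemma inflation_ker : kernel_closed inflation.
Proof.
move=> X Y f [annX VX] [annY VY] hf K k kerK; have [hk inj_k _ _] := kerK.
have annK := ker_ann_sub hk inj_k annX; exists annK; have [_ kerV _ _] := wideV.
apply: (kerV _ _ _ VX VY (descend_hom annX annY hf) (descend annK) k).
by case: kerK => ? ? ? ?; split=> //; apply: descend_hom.
Qed.

Lemma inflation_coker : cokernel_closed inflation.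
Proof.
move=> X Y f [annX VX] [annY VY] hf C c cokC; have [hc surj_c _ _] := cokC.
have annC := ker_ann_quot hc surj_c annY; exists annC; have [_ _ cokerV _] := wideV.
apply: (cokerV _ _ _ VX VY (descend_hom annX annY hf) (descend annC) c).
by case: cokC => ? ? ? ?; split=> //; apply: descend_hom.
Qed.

Lemma inflation_ext X E Y i p :
  short_exact X E Y i p -> ker_ann E -> inflation X -> inflation Y -> inflation E.
Proof.
move=> sesE annE [annX VX] [annY VY]; exists annE; have [_ _ _ extV] := wideV.
apply: (extV (descend annX) (descend annE) (descend annY) i p) VX VY.
by case: sesE => ? ? ? ? ?; split=> //; apply: descend_hom.
Qed.

Lemma inflation_res (Y : fmod Lam) : inflation (res phi Y) <-> V Y.
Proof.
have [isoV _ _ _] := wideV.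
have iso_descend (annY : ker_ann (res phi Y)) : iso (descend annY) Y.
  by exists 1%:M, 1%:M; split=> [y|y||]; rewrite ?mulmx1 ?mul1mx //= phi_preK.
split=> [[annY VY] | VY]; first exact: isoV (iso_descend annY) VY.
by exists (ker_ann_res Y); apply: isoV VY; apply/iso_sym/iso_descend.
Qed.

Lemma filtn_inflation (Y0 : fmod Lam) n X :
  V Y0 -> filtn inflation n X -> ker_ann X -> inflation X.
Proof.
move=> VY0; elim: n X => [|n IHn] X /=.
  by move=> X0 annX; exists annX; apply: (wide_dim0 (X := descend annX) wideV VY0 X0).
case=> S [X' [i [p [[infS _ _] sesX filtX']]]] annX.
have [_ hp _ surj_p _] := sesX.
exact: inflation_ext sesX annX infS (IHn X' filtX' (ker_ann_quot hp surj_p annX)).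
Qed.

Lemma exists_wide_restrL : exists W, wide W /\ subcat_eq (restrL phi W) V.
Proof.
(* An empty V must be treated apart: the zero module lies in every [Filt]. *)
have [[Y0 VY0] | noV] := classic (exists Y0 : fmod Lam, V Y0); last first.
  exists (fun _ => False); split=> [|Y]; last by split=> // VY; apply: noV; exists Y.
  by split=> [? ? ? [] | ? ? ? [] | ? ? ? [] | ? ? ? ? ? ? []].
exists (Filt inflation); split.
  exact: Filt_wide inflation_ker inflation_coker.
move=> Y; split=> [[n filtY] | /inflation_res]; last exact: (P_Filt inflation_coker).
exact/inflation_res/(filtn_inflation VY0 filtY (ker_ann_res Y)).
Qed.

End Inflation.

Unset Implicit Arguments.

Theorem lemma7p2 (F : fieldType) (Gam Lam : falgType F)
  (phi : {lrmorphism Gam -> Lam}) (M : subcat Gam) :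
  (forall y : Lam, exists x : Gam, phi x = y) ->
  iso_closed M ->
  subcat_le (modL phi) M ->
  [/\ complete_lattice (widshad M),
      meet_map (@wide F Gam) (widshad M) (fun W => capS W M),
      surj_map (@wide F Gam) (widshad M) (fun W => capS W M),
      meet_map (widshad M) (@wide F Lam) (restrL phi)
    & surj_map (widshad M) (@wide F Lam) (restrL phi)].
Proof.
move=> phi_surj _ modL_M; split.
- exact: complete_lattice_widshad.
- apply: meet_map_capS => [W wideW | W1 W2 | W1 W2 eqW X | W1 W2 X].
  + by exists W.
  + exact: wide_capS.
  + by split=> -[/eqW WX MX].
  + by rewrite /capS; tauto.
- by move=> S [W [wideW eqS]]; exists W; split=> // X; split=> /eqS.
- apply: meet_map_capS => [S | S1 S2 | S1 S2 eqS Y | S1 S2 Y] //.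
  + exact: widshad_restrL.
  + exact: widshad_capS.
  + exact: eqS.
- move=> V wideV; have [W [wideW eqW]] := exists_wide_restrL phi_surj wideV.
  exists (capS W M); split; first by exists W.
  move=> Y; rewrite -eqW /restrL /capS.
  by split=> [[] | WY] //; split=> //; apply/modL_M/modL_res.
Qed.
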